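(* Let $P$ be a program context and let ${\mathcal{V}}, \mathcal{W}$ be sets of variables such that $P \in \mathcal{E}_{{\mathcal{V}}}$ and $P \in \mathcal{E}_{\mathcal{W}}$ (open evaluation contexts). Then ${\mathcal{V}} = \mathcal{W}$.
   Context: Syntax (split presentation). Terms: $t,u,s ::= x \mid \lambda x.t \mid t\,u$ (ordinary $\lambda$-terms over a countable set of variables). Values: $v,w ::= \lambda x.t$ (variables are not values). Environments: $E ::= \epsilon \mid E[x\leftarrow t]$ (lists of explicit substitutions, ES). Programs: $p ::= (t,E)$. In $E[x\leftarrow t]$ and $(u,E[x\leftarrow t])$ the variable $x$ is bound in $E$ and $u$; everything is up to $\alpha$-renaming, and appended ES are always assumed to bind fresh variables (Barendregt's convention). Appending an ES to a program: $(t,E)@[x\leftarrow u] := (t,E[x\leftarrow u])$. Inert terms and fireballs: $i ::= x \mid i\,f$, $f ::= v \mid i$. Open term evaluation contexts: $\mathcal{H} ::= \langle\cdot\rangle \mid \mathcal{H}\,t \mid i\,\mathcal{H}$ (with $i$ inert). Term contexts in general: $C ::= \langle\cdot\rangle \mid C\,t \mid t\,C$. Environment contexts: $G ::= E[x\leftarrow C] \mid G[x\leftarrow u]$. Program contexts: $P ::= (C,E) \mid (t,G)$. Appending an ES to a program context: $(C,E)@[x\leftarrow u] := (C,E[x\leftarrow u])$, $(t,G)@[x\leftarrow u] := (t,G[x\leftarrow u])$. Plugging a program into a program context: $(C,E)\langle (t,E')\rangle := (C\langle t\rangle, E'E)$; $(u,E[x\leftarrow C])\langle (t,E')\rangle :=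 (u, E[x\leftarrow C\langle t\rangle]E')$; $(u,G[x\leftarrow s])\langle (t,E)\rangle := ((u,G)\langle(t,E)\rangle)@[x\leftarrow s]$. Plugging a term $t$ into $P$ means $P\langle t\rangle := P\langle (t,\epsilon)\rangle$. For a program $p=(t,E)$ and a head context $\mathcal{H}$, $p@[x\leftarrow\mathcal{H}]$ denotes the program context $(t,E[x\leftarrow\mathcal{H}])$. Needed variables: $nv(x)=\{x\}$, $nv(\lambda x.t)=\emptyset$, $nv(t\,u)=nv(t)\cup nv(u)$; $nv((t,\epsilon))=nv(t)$, and $nv((t,E[x\leftarrow u]))=nv((t,E))$ if $x\notin nv((t,E))$, and $=(nv((t,E))\setminus\{x\})\cup nv(u)$ if $x\in nv((t,E))$. For term contexts: $nv(\langle\cdot\rangle)=\emptyset$, $nv(\mathcal{H}\,t)=nv(\mathcal{H})$, $nv(i\,\mathcal{H})=nv(i)\cup nv(\mathcal{H})$. Open evaluation contexts: the relation $P\in\mathcal{E}_{{\mathcal{V}}}$ ($P$ is an open evaluation context with needed variables ${\mathcal{V}}$) is inductively defined by: (ax) $(\mathcal{H},\epsilon)\in\mathcal{E}_{nv(\mathcal{H})}$; (inert) if $P\in\mathcal{E}_{{\mathcal{V}}}$ and $x\in{\mathcal{V}}$ then $P@[x\leftarrow i]\in\mathcal{E}_{({\mathcal{V}}\setminus\{x\})\cup nv(i)}$ for $i$ inert; (gc) if $P\in\mathcal{E}_{{\mathcal{V}}}$ and $x\notin{\mathcal{V}}$ then $P@[x\leftarrow t]\in\mathcal{E}_{{\mathcal{V}}}$;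 (her) if $P\in\mathcal{E}_{{\mathcal{V}}}$ and $x\notin{\mathcal{V}}$ then $P\langle x\rangle@[x\leftarrow\mathcal{H}]\in\mathcal{E}_{{\mathcal{V}}\cup nv(\mathcal{H})}$. In the last three rules $x$ is not in the domain of $P$. *)

From HB Require Import structures.
From mathcomp Require Import all_boot.
From mathcomp Require Import finmap.

Set Implicit Arguments.
Unset Strict Implicit.
Unset Printing Implicit Defensive.

Local Open Scope fset_scope.

Definition var := nat.

Inductive term : Type :=
| Var : var -> term
| Lam : var -> term -> term
| App : term -> term -> term.

(* Environments  E ::= eps | E[x <- t]  (the rightmost ES is the outermost). *)
Inductive env : Type :=
| Eps : env
| ESub : env -> var -> term -> env.

Definition program : Type := (term * env)%type.

(* Concatenation  E' E  (E' inner, E outer). *)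
Fixpoint env_cat (E' E : env) : env :=
  match E with
  | Eps => E'
  | ESub E0 x u => ESub (env_cat E' E0) x u
  end.

Fixpoint env_dom (E : env) : {fset var} :=
  match E with
  | Eps => fset0
  | ESub E0 x _ => env_dom E0 `|` [fset x]
  end.

Inductive inert : term -> Prop :=
| inert_var : forall x, inert (Var x)
| inert_app : forall i f, inert i -> fireball f -> inert (App i f)
with fireball : term -> Prop :=
| fireball_val : forall x t, fireball (Lam x t)
| fireball_inert : forall i, inert i -> fireball i.

Inductive tctx : Type :=
| Hole : tctx
| CAppL : tctx -> term -> tctx
| CAppR : term -> tctx -> tctx.

Fixpoint tplug (C : tctx) (t : term) : term :=
  match C with
  | Hole => t
  | CAppL C0 u => App (tplug C0 t) u
  | CAppR u C0 => App u (tplug C0 t)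
  end.

Inductive head_ctx : tctx -> Prop :=
| head_hole : head_ctx Hole
| head_appL : forall H t, head_ctx H -> head_ctx (CAppL H t)
| head_appR : forall i H, inert i -> head_ctx H -> head_ctx (CAppR i H).

Fixpoint nv (t : term) : {fset var} :=
  match t with
  | Var x => [fset x]
  | Lam _ _ => fset0
  | App t1 t2 => nv t1 `|` nv t2
  end.

Fixpoint nv_prog_aux (t : term) (E : env) : {fset var} :=
  match E with
  | Eps => nv t
  | ESub E0 x u =>
      let N := nv_prog_aux t E0 in
      if x \in N then (N `\ x) `|` nv u else N
  end.

Definition nv_prog (p : program) : {fset var} := nv_prog_aux p.1 p.2.

Fixpoint nv_ctx (C : tctx) : {fset var} :=
  match C with
  | Hole => fset0
  | CAppL C0 _ => nv_ctx C0
  | CAppR i C0 => nv i `|` nv_ctx C0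
  end.

(* Program contexts  P ::= (C,E) | (t,G)  with  G ::= E[x<-C] | G[x<-u].
   A G is represented as  E[x<-C]E2  by  (E, x, C, E2). *)
Inductive pctx : Type :=
| PTerm : tctx -> env -> pctx
| PEnv : term -> env -> var -> tctx -> env -> pctx.

Definition pctx_app (P : pctx) (x : var) (u : term) : pctx :=
  match P with
  | PTerm C E => PTerm C (ESub E x u)
  | PEnv t E y C E2 => PEnv t E y C (ESub E2 x u)
  end.

Definition pctx_dom (P : pctx) : {fset var} :=
  match P with
  | PTerm _ E => env_dom E
  | PEnv _ E y _ E2 => env_dom E `|` [fset y] `|` env_dom E2
  end.

Definition pplug (P : pctx) (p : program) : program :=
  match P with
  | PTerm C E => (tplug C p.1, env_cat p.2 E)
  | PEnv u E x C E2 => (u, env_cat (env_cat (ESub E x (tplug C p.1)) p.2) E2)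
  end.

Definition pplug_term (P : pctx) (t : term) : program := pplug P (t, Eps).

Definition prog_app_ctx (p : program) (x : var) (H : tctx) : pctx :=
  PEnv p.1 p.2 x H Eps.

(* Open evaluation contexts:  P \in E_V  is  open_ectx P V *)
Inductive open_ectx : pctx -> {fset var} -> Prop :=
| oe_ax : forall H, head_ctx H -> open_ectx (PTerm H Eps) (nv_ctx H)
| oe_inert : forall P V x i,
    open_ectx P V -> x \in V -> x \notin pctx_dom P -> inert i ->
    open_ectx (pctx_app P x i) ((V `\ x) `|` nv i)
| oe_gc : forall P V x t,
    open_ectx P V -> x \notin V -> x \notin pctx_dom P ->
    open_ectx (pctx_app P x t) V
| oe_her : forall P V x H,
    open_ectx P V -> x \notin V -> x \notin pctx_dom P -> head_ctx H ->
    open_ectx (prog_app_ctx (pplug_term P (Var x)) x H) (V `|` nv_ctx H).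

From mathcomp Require Import all_boot finmap.

(* The needed variables are computed along the derivation, so it suffices that
   [P] determines its derivation. The outermost ES of [P] determines the last
   rule, once (inert) and (gc) are merged into one rule. The exception is (her), [P = P0<x>@[x <- H]]:
   recovering [P0] from the program [P0<x>] needs injectivity of plugging a
   fresh variable into an open evaluation context. This is again proved by
   comparing outermost ES; the key fact is that a plugged variable is needed
   in the term it lands in, so it cannot sit inside an ES appended by (inert),
   nor be a variable bound by the context. *)

Local Open Scope fset_scope.

Lemma nv_tplug_var C y : y \in nv (tplug C (Var y)).
Proof. by elim: C => [|C IH t|t C IH] /=; rewrite ?inE ?IH ?orbT. Qed.

Lemma head_ctx_plug_inj {H1 H2 y1 y2} : head_ctx H1 -> head_ctx H2 ->
  y1 \notin nv_ctx H2 -> y2 \notin nv_ctx H1 ->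
  tplug H1 (Var y1) = tplug H2 (Var y2) -> H1 = H2 /\ y1 = y2.
Proof.
move=> hH1; elim: hH1 H2 => [|H t _ IH|i H _ _ IH] H2 [|H' t' hH'|i' H' _ hH'] //=.
- by move=> _ _ [->].
- by move=> y1_H' y2_H [/IH[] // -> -> ->].
- by move=> y1_iH _ [eq_i _]; move: y1_iH; rewrite -eq_i inE nv_tplug_var.
- by move=> _ y2_iH [eq_i _]; move: y2_iH; rewrite eq_i inE nv_tplug_var.
- by rewrite !inE !negb_or => /andP[_ y1_H'] /andP[_ y2_H] [-> /IH[] // -> ->].
Qed.

Definition prog_app (p : program) (x : var) (u : term) : program :=
  (p.1, ESub p.2 x u).

Lemma prog_app_inj p x u p' x' u' :
  prog_app p x u = prog_app p' x' u' -> [/\ p = p', x = x' & u = u'].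
Proof. by case: p p' => [t E] [t' E'] [-> -> -> ->]. Qed.

Lemma prog_app_ctx_inj p x H p' x' H' :
  prog_app_ctx p x H = prog_app_ctx p' x' H' -> [/\ p = p', x = x' & H = H'].
Proof. by case: p p' => [t E] [t' E'] [-> -> -> ->]. Qed.

Lemma pctx_app_inj P x u P' x' u' :
  pctx_app P x u = pctx_app P' x' u' -> [/\ P = P', x = x' & u = u'].
Proof.
by case: P P' => [C E|t E y C E2] [C' E'|t' E' y' C' E2'] //= [] *; subst.
Qed.

Lemma pctx_app_neq_PTerm P x u H : pctx_app P x u <> PTerm H Eps.
Proof. by case: P. Qed.

Lemma pctx_app_neq_prog_app_ctx P x u p y H : pctx_app P x u <> prog_app_ctx p y H.
Proof. by case: P. Qed.

Lemma pplug_pctx_app P x u t :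
  pplug_term (pctx_app P x u) t = prog_app (pplug_term P t) x u.
Proof. by case: P. Qed.

Lemma pplug_prog_app_ctx p x H t :
  pplug_term (prog_app_ctx p x H) t = prog_app p x (tplug H t).
Proof. by []. Qed.

Lemma env_dom_cat E' E : env_dom (env_cat E' E) = env_dom E' `|` env_dom E.
Proof. by elim: E => [|E IH x u] /=; rewrite ?fsetU0 // IH fsetUA. Qed.

Lemma pctx_dom_app P x u : pctx_dom (pctx_app P x u) = pctx_dom P `|` [fset x].
Proof. by case: P => [C E|t E y C E2] //=; rewrite fsetUA. Qed.

Lemma pctx_dom_prog_app_ctx P x H y :
  pctx_dom (prog_app_ctx (pplug_term P (Var y)) x H) = pctx_dom P `|` [fset x].
Proof. by case: P => [C E|t E z C E2] /=; rewrite !env_dom_cat ?fset0U ?fsetU0. Qed.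

Lemma open_ectx_app_ind (Q : pctx -> {fset var} -> Prop) :
  (forall H, head_ctx H -> Q (PTerm H Eps) (nv_ctx H)) ->
  (forall P V x u, open_ectx P V -> Q P V -> x \notin pctx_dom P ->
     Q (pctx_app P x u) (if x \in V then V `\ x `|` nv u else V)) ->
  (forall P V x H, open_ectx P V -> Q P V -> x \notin V -> x \notin pctx_dom P ->
     head_ctx H -> Q (prog_app_ctx (pplug_term P (Var x)) x H) (V `|` nv_ctx H)) ->
  forall P V, open_ectx P V -> Q P V.
Proof.
move=> Qax Qapp Qher P V; elim=> {P V} [H hH | P V x i hP QP xV xP _
  | P V x t hP QP xV xP | P V x H hP QP xV xP hH].
- exact: Qax.
- by have := Qapp _ _ x i hP QP xP; rewrite xV.
- by have := Qapp _ _ x t hP QP xP; rewrite (negbTE xV).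
- exact: Qher.
Qed.

Ltac fset_bool := repeat (rewrite ?inE; match goal with
  | |- context [if ?b then _ else _] => case: b
  | |- context [?a \in ?b] => case: (a \in b)
  | |- context [?a == ?b] => case: (a == b) end); by [].

Lemma open_ectx_plug_inj {P1 V1 P2 V2 y1 y2} :
  open_ectx P1 V1 -> open_ectx P2 V2 ->
  y1 \notin pctx_dom P1 `|` V2 -> y2 \notin pctx_dom P2 `|` V1 ->
  pplug_term P1 (Var y1) = pplug_term P2 (Var y2) -> P1 = P2 /\ y1 = y2.
Proof.
move=> h1; elim/open_ectx_app_ind: P1 V1 / h1 P2 V2 y1 y2
  => [H1 hH1 | P1 V1 x u h1 IH xP1 | P1 V1 x H1 h1 IH xV1 xP1 hH1] P2 V2 y1 y2 h2;
 elim/open_ectx_app_ind: P2 V2 / h2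
  => [H2 hH2 | P2 V2 x' u' h2 _ xP2 | P2 V2 x' H2 h2 _ xV2 xP2 hH2];
 rewrite ?pplug_pctx_app ?pplug_prog_app_ctx ?pctx_dom_app
   ?pctx_dom_prog_app_ctx //=.
- by rewrite !fset0U => y1H2 y2H1 [/(head_ctx_plug_inj hH1 hH2 y1H2 y2H1)[-> ->]].
- move=> y1_fresh y2_fresh /prog_app_inj[eq_plug eq_x <-]; subst x'.
  have [||-> ->] // := IH P2 V2 y1 y2 h2 _ _ eq_plug.
  + by move: y1_fresh; fset_bool.
  + by move: y2_fresh; fset_bool.
- move=> y1_fresh y2_fresh /prog_app_inj[eq_plug eq_x eq_u]; subst x'.
  case: ifP y2_fresh => [xV1 | /negbT xV1] y2_fresh.
  + by move: y2_fresh; rewrite eq_u !inE nv_tplug_var !orbT.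
  + have [||_ y1x] := IH P2 V2 y1 x h2 _ _ eq_plug.
    * by move: y1_fresh; fset_bool.
    * by move: xP2 xV1; fset_bool.
    * by move: y1_fresh; rewrite y1x !inE eqxx orbT.
- move=> y1_fresh y2_fresh /prog_app_inj[eq_plug eq_x eq_u]; subst x'.
  case: ifP y1_fresh => [xV2 | /negbT xV2] y1_fresh.
  + by move: y1_fresh; rewrite -eq_u !inE nv_tplug_var !orbT.
  + have [||_ xy2] := IH P2 V2 x y2 h2 _ _ eq_plug.
    * by move: xP1 xV2; fset_bool.
    * by move: y2_fresh; fset_bool.
    * by move: y2_fresh; rewrite -xy2 !inE eqxx orbT.
- move=> y1_fresh y2_fresh /prog_app_inj[eq_p eq_x eq_H]; subst x'.
  have [||-> ->] := head_ctx_plug_inj hH1 hH2 _ _ eq_H.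
  + by move: y1_fresh; fset_bool.
  + by move: y2_fresh; fset_bool.
  + by rewrite eq_p.
Qed.

Theorem mainTheorem1 (P : pctx) (V W : {fset var}) :
  open_ectx P V -> open_ectx P W -> V = W.
Proof.
move=> hV hW; suff nv_eq P' W' : open_ectx P' W' -> P = P' -> V = W'.
  exact: nv_eq hW erefl.
elim/open_ectx_app_ind: P V / hV {hW} P' W'
  => [H hH | P V x u hP IH xP | P V x H hP IH xV xP hH] P' W' hW';
 elim/open_ectx_app_ind: P' W' / hW'
  => [H' _ | P' W' x' u' hP' _ _ | P' W' x' H' hP' _ xW' xP' _] //.
- by case=> ->.
- by move/esym/pctx_app_neq_PTerm.
- by move/pctx_app_neq_PTerm.
- by case/pctx_app_inj => /(IH _ _ hP') -> -> ->.
- by move/pctx_app_neq_prog_app_ctx.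
- by move/esym/pctx_app_neq_prog_app_ctx.
- case/prog_app_ctx_inj => eq_plug eq_x ->; subst x'.
  have [|| eq_P _] := open_ectx_plug_inj hP hP' _ _ eq_plug.
  + by move: xP xW'; fset_bool.
  + by move: xP' xV; fset_bool.
  + by rewrite (IH _ _ hP' eq_P).
Qed.
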